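(* Suppose $\mathcal Y$ is finite-dimensional of dimension $d\in\mathbb N$. There exists a constant $c>0$ (depending only on $(\mathcal Y,\|\cdot\|_{\mathcal Y})$, not on the functional) such that the following holds: for every linear functional $H:\underline{\mathcal Z}\to\mathcal Y$ with a formal convolution representation $\underline\kappa$ and every $\underline z\in\underline{\mathcal Z}$, there exist disjoint subsets $J_1,\dots,J_{2^d}\subseteq\mathbb Z_-$ with $$\sum_{t\le0}\|\kappa_t(z_t)\|_{\mathcal Y}\le c\sum_{i=1}^{2^d}\Big\|H\Big(\sum_{t\in J_i}\delta^t(z_t)\Big)\Big\|_{\mathcal Y}<\infty.$$ In particular, the convolution representation of $H$ is proper.
   Context: Let $(\mathcal Z,\|\cdot\|)$ and $(\mathcal Y,\|\cdot\|_{\mathcal Y})$ be normed vector spaces over $\mathbb R$ and $\mathcal B=\{z\in\mathcal Z:\|z\|\le1\}$. Let $\mathbb Z_-=\{0,-1,-2,\dots\}$; elements of $\mathcal Z^{\mathbb Z_-}$ are sequences $\underline z=(z_t)_{t\le0}$. For $t\in\mathbb Z_-$, $\delta^t:\mathcal Z\to\mathcal Z^{\mathbb Z_-}$ maps $z$ to the sequence whose entry at time $t$ is $z$ and all other entries are $0$. Standing assumption: $\underline{\mathcal Z}\subseteq\mathcal Z^{\mathbb Z_-}$ is a set such that (a) $\underline{\mathcal Z}$ is convex and $\underline{\mathcal Z}=\{-\underline z:\underline z\in\underline{\mathcal Z}\}$; (b) $\delta^t(\mathcal B)\subseteq\underline{\mathcal Z}$ for all $t\in\mathbb Z_-$; (c)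 for every $\underline z\in\underline{\mathcal Z}$ and every $J\subseteq\mathbb Z_-$, the sequence $\sum_{t\in J}\delta^t(z_t)$ (equal to $z_t$ at times $t\in J$ and $0$ elsewhere) belongs to $\underline{\mathcal Z}$. A functional $H:\underline{\mathcal Z}\to\mathcal Y$ is linear if it is the restriction of a linear map defined on the linear span of $\underline{\mathcal Z}$. $L(\mathcal Z,\mathcal Y)$ is the space of continuous linear maps $\mathcal Z\to\mathcal Y$. $H$ has a formal convolution representation $\underline\kappa\in L(\mathcal Z,\mathcal Y)^{\mathbb Z_-}$ if $H(\underline z)=\lim_{T\to-\infty}\sum_{t=T}^0\kappa_t(z_t)$ for all $\underline z\in\underline{\mathcal Z}$; the representation is proper if moreover $\sum_{t\le0}\|\kappa_t(z_t)\|_{\mathcal Y}<\infty$ for all $\underline z\in\underline{\mathcal Z}$. *)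

From HB Require Import structures.
From mathcomp Require Import all_boot all_order all_algebra.
From mathcomp Require Import all_classical all_reals all_analysis.
Set Implicit Arguments. Unset Strict Implicit. Unset Printing Implicit Defensive.
Import Order.TTheory GRing.Theory Num.Theory.
Import numFieldNormedType.Exports.
Local Open Scope classical_set_scope.
Local Open Scope ring_scope.

(* Time convention: index n : nat stands for time t = -n in Z_- = {0,-1,-2,...}.
   A sequence (z_t)_{t <= 0} is thus a function nat -> Z, with z n = z_{-n}.
   Subsets J of Z_- are likewise represented as sets of nat. *)

Section Defs.
Variable R : realType.

Definition findim (Y : lmodType R) (d : nat) : Prop :=
  exists f : Y -> 'rV[R]_d, linear f /\ bijective f.

Variable Z : normedModType R.

Definition delta (t : nat) (z : Z) : nat -> Z :=
  fun n => if n == t then z else 0.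

(* sum_{t in J} delta^t(z_t) *)
Definition restr_seq (J : set nat) (z : nat -> Z) : nat -> Z :=
  fun n => if n \in J then z n else 0.

Definition standing_assumption (Zs : set (nat -> Z)) : Prop :=
  [/\ (forall x y (l : R), Zs x -> Zs y -> 0 <= l -> l <= 1 ->
         Zs (fun n => l *: x n + (1 - l) *: y n)),
      (forall x, Zs x -> Zs (fun n => - x n)),
      (forall t (z : Z), `|z| <= 1 -> Zs (delta t z)) &
      (forall z (J : set nat), Zs z -> Zs (restr_seq J z))].

Inductive in_span (S : set (nat -> Z)) : (nat -> Z) -> Prop :=
| span_zero : in_span S (fun _ => 0)
| span_mem x : S x -> in_span S x
| span_comb (a b : R) x y : in_span S x -> in_span S y ->
    in_span S (fun n => a *: x n + b *: y n).

Variable Y : normedModType R.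

Definition linear_functional (Zs : set (nat -> Z)) (H : (nat -> Z) -> Y) : Prop :=
  exists L : (nat -> Z) -> Y,
    (forall (a b : R) x y, in_span Zs x -> in_span Zs y ->
       L (fun n => a *: x n + b *: y n) = a *: L x + b *: L y) /\
    (forall z, Zs z -> H z = L z).

Definition formal_conv (Zs : set (nat -> Z)) (H : (nat -> Z) -> Y)
    (kappa : nat -> {linear Z -> Y}) : Prop :=
  (forall t, continuous (kappa t)) /\
  (forall z, Zs z ->
     (fun N : nat => \sum_(0 <= n < N.+1) kappa n (z n)) @ \oo --> H z).

Definition proper_conv (Zs : set (nat -> Z)) (kappa : nat -> {linear Z -> Y}) : Prop :=
  forall z, Zs z -> (\sum_(0 <= n <oo) (`|kappa n (z n)|)%:E < +oo)%E.

End Defs.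

(* Identify Y with R^d through a linear isomorphism f; by compactness of the
   unit sphere, ||y|| and the l1 norm sum_j |f(y)_j| are comparable up to a
   constant C.  Sort the times t into the 2^d classes given by the sign pattern
   of the coordinates of f(kappa_t(z_t)).  Within one class every coordinate
   has constant sign, so sum_t |f(kappa_t z_t)_j| over the class equals the
   j-th coordinate of f applied to the class sum, which is a partial sum of the
   series for H restricted to that class.  Hence each partial sum of
   sum_t ||kappa_t(z_t)|| is at most C^2 d times the sum over classes of the
   norms of these partial sums, and the bound follows in the limit. *)

From HB Require Import structures.
From mathcomp Require Import all_boot all_order all_algebra.
From mathcomp Require Import all_classical all_reals all_analysis.
Import Order.TTheory GRing.Theory Num.Theory.
Import numFieldNormedType.Exports.
Local Open Scope classical_set_scope.
Local Open Scope ring_scope.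

Lemma normr_mx_coord (K : realDomainType) m n (x : 'M[K]_(m, n)) i j :
  `|x i j| <= `|x|.
Proof.
by rewrite [leRHS]/Num.norm /= mx_normrE; apply/bigmax_geP; right; exists (i, j).
Qed.

Section FiniteDimensionalNorms.
Context {R : realType} {Y : normedModType R} {d : nat}.
Implicit Types (g : {linear 'rV[R]_d -> Y}) (x : 'rV[R]_d).

Lemma linear_rV_l1_bound g :
  exists2 K, 0 <= K & forall x, `|g x| <= K * \sum_(j < d) `|x 0 j|.
Proof.
exists (\sum_(j < d) `|g (delta_mx 0 j)|); first exact: sumr_ge0.
move=> x; rewrite {1}(row_sum_delta x) linear_sum mulr_sumr.
apply: le_trans (ler_norm_sum _ _ _) _; apply: ler_sum => j _.
rewrite linearZ normrZ mulrC ler_wpM2r //.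
by rewrite (bigD1 j) //= lerDl; exact: sumr_ge0.
Qed.

Lemma linear_rV_continuous g : continuous g.
Proof.
apply: bounded_linear_continuous; apply/bounded_funP => r.
have [K K0 gK] := linear_rV_l1_bound g.
exists (K * (r *+ d)) => x xr; apply: le_trans (gK x) _; rewrite ler_wpM2l //.
have -> : r *+ d = \sum_(j < d) r by rewrite sumr_const card_ord.
apply: ler_sum => j _.
exact: le_trans (@normr_mx_coord R 1 d x 0 j) xr.
Qed.

Lemma unit_sphere_compact : compact [set x : 'rV[R]_d | `|x| = 1].
Proof.
apply: bounded_closed_compact.
  by exists 1; split; [exact: num_real | move=> M M1 x /= ->; exact: ltW].
rewrite -[X in closed X]/((fun x : 'rV[R]_d => `|x|) @^-1` [set 1]).
by apply: preimage_closed => [x _|]; [exact: norm_continuous | exact: closed_eq].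
Qed.

Lemma linear_rV_inj_lower_bound g :
  injective g -> exists2 m, 0 < m & forall x, m * `|x| <= `|g x|.
Proof.
move=> g_inj; pose S := [set x : 'rV[R]_d | `|x| = 1].
have S_normalize x : x != 0 -> S (`|x|^-1 *: x).
  by move=> x0; rewrite /S /= normrZ normfV normr_id mulVf ?normr_eq0.
have [S0|S_empty] := pselect (S !=set0); last first.
  exists 1 => // x; have [->|/S_normalize Sx] := eqVneq x 0.
    by rewrite normr0 mulr0.
  by case: S_empty; exists (`|x|^-1 *: x).
have gS : {within S, continuous (fun x => `|g x|)}.
  apply: continuous_subspaceT => x.
  exact: continuous_comp (linear_rV_continuous g x) (@norm_continuous _ _ _).
have [c /set_mem Sc cmin] := EVT_min_rV S0 unit_sphere_compact gS.
have gc0 : 0 < `|g c|.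
  rewrite normr_gt0 -(linear0 g); apply: contraTneq isT => /g_inj c0.
  by move: Sc; rewrite /S /= c0 normr0 => /esym/eqP; rewrite oner_eq0.
exists `|g c| => // x; have [->|x0] := eqVneq x 0; first by rewrite normr0 mulr0.
have := cmin _ (mem_set (S_normalize x x0)).
by rewrite linearZ normrZ normfV normr_id ler_pdivlMl ?normr_gt0 // mulrC.
Qed.

End FiniteDimensionalNorms.

Lemma findim_coord_bounds (R : realType) (Y : normedModType R) (d : nat) :
  findim Y d ->
  exists (f : {linear Y -> 'rV[R]_d}) (C : R), [/\ 0 < C,
    forall y j, `|f y 0 j| <= C * `|y| &
    forall y, `|y| <= C * \sum_(j < d) `|f y 0 j|].
Proof.
move=> [f [f_lin [g fK gK]]].
have g_lin : linear g by move=> a u v; apply: (can_inj fK); rewrite gK f_lin !gK.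
pose fl : {linear Y -> 'rV[R]_d} := HB.pack f (GRing.isLinear.Build _ _ _ _ _ f_lin).
pose gl : {linear 'rV[R]_d -> Y} := HB.pack g (GRing.isLinear.Build _ _ _ _ _ g_lin).
have [m m_gt0 gl_ge] := linear_rV_inj_lower_bound gl (can_inj gK).
have [K K_ge0 gl_le] := linear_rV_l1_bound gl.
exists fl, (m^-1 + K); split.
- by rewrite ltr_wpDr // invr_gt0.
- move=> y j; apply: le_trans (@normr_mx_coord R 1 d (f y) 0 j) _.
  rewrite mulrDl ler_wpDr ?mulr_ge0 // ler_pdivlMl // -{2}(fK y); exact: gl_ge.
- move=> y; rewrite -{1}(fK y) mulrDl; apply: le_trans (gl_le (f y)) _.
  by rewrite lerDr mulr_ge0 ?sumr_ge0 // invr_ge0 ltW.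
Qed.

Lemma nneseries_le_lim_of_partial_sums {R : realType} (u v : R^nat) (l : R) :
  (forall n, 0 <= u n) -> (forall N, \sum_(0 <= n < N) u n <= v N) ->
  v @ \oo --> l -> (\sum_(0 <= n <oo) (u n)%:E <= l%:E)%E.
Proof.
move=> u_ge0 u_le_v v_l; apply: lime_le.
  by apply: is_cvg_nneseries => n _ _; rewrite lee_fin.
apply: nearW => N; rewrite sumEFin lee_fin; apply: (cvgr_to_ge v_l).
near=> M; apply: le_trans (u_le_v M).
have NM : (N <= M)%N by near: M; exact: nbhs_infty_ge.
by rewrite (big_cat_nat (leq0n N) NM) /= lerDl sumr_ge0.
Unshelve. all: by end_near.
Qed.

Lemma formal_conv_restr {R : realType} {Z Y : normedModType R} {Zs : set (nat -> Z)}
    {H : (nat -> Z) -> Y} {kappa : nat -> {linear Z -> Y}} :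
  standing_assumption Zs -> formal_conv Zs H kappa ->
  forall z (P : pred nat), Zs z ->
  (fun N => \sum_(0 <= n < N | P n) kappa n (z n)) @ \oo --> H (restr_seq [set` P] z).
Proof.
move=> [_ _ _ Zs_restr] [_ H_lim] z P Zz; rewrite -cvg_shiftS.
have -> : [sequence \sum_(0 <= n < N.+1 | P n) kappa n (z n)]_N =
          (fun N => \sum_(0 <= n < N.+1) kappa n (restr_seq [set` P] z n)).
  apply/funext => N /=; rewrite [LHS]big_mkcond; apply: eq_bigr => n _.
  by rewrite /restr_seq mem_setE unfold_in; case: (P n); rewrite ?linear0.
exact: H_lim (Zs_restr z _ Zz).
Qed.

Lemma bijective_ord_of_card (T : finType) (k : nat) :
  #|T| = k -> exists e : 'I_k -> T, bijective e.
Proof.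
by move=> <-; exists enum_val; exists enum_rank; [exact: enum_valK | exact: enum_rankK].
Qed.

Section SignPatterns.
Context {R : realDomainType} {d : nat}.

Definition sign_pattern (x : 'rV[R]_d) : {ffun 'I_d -> bool} := [ffun j => x 0 j < 0].

Lemma sum_normr_const_sign {I : Type} (r : seq I) (P : pred I) (y : I -> R) (b : bool) :
  (forall i, P i -> (y i < 0) = b) ->
  \sum_(i <- r | P i) `|y i| = `|\sum_(i <- r | P i) y i|.
Proof.
case: b => y_sign.
  rewrite ler0_norm; last by apply: sumr_le0 => i /y_sign/ltW.
  by rewrite -sumrN; apply: eq_bigr => i /y_sign/ltW/ler0_norm.
have y_ge0 i : P i -> 0 <= y i by move/y_sign/negbT; rewrite -leNgt.
rewrite ger0_norm; last exact: sumr_ge0.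
by apply: eq_bigr => i /y_ge0/ger0_norm.
Qed.

Lemma sum_l1_sign_classes {I : Type} (r : seq I) (b : I -> 'rV[R]_d) :
  \sum_(i <- r) \sum_(j < d) `|b i 0 j| =
  \sum_(p : {ffun 'I_d -> bool})
     \sum_(j < d) `|(\sum_(i <- r | sign_pattern (b i) == p) b i) 0 j|.
Proof.
rewrite (partition_big (fun i => sign_pattern (b i)) xpredT) //=.
apply: eq_bigr => p _; rewrite exchange_big; apply: eq_bigr => j _.
rewrite summxE; apply: (@sum_normr_const_sign _ _ _ _ (p j)) => i /eqP <-.
by rewrite ffunE.
Qed.

End SignPatterns.

Section SignClassBounds.
Context {R : realType} {Y : normedModType R} {d : nat}.
Context {f : {linear Y -> 'rV[R]_d}} {C : R}.
Hypotheses (C_ge0 : 0 <= C) (f_coord_le : forall y j, `|f y 0 j| <= C * `|y|)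
  (norm_le_f : forall y, `|y| <= C * \sum_(j < d) `|f y 0 j|).

Lemma sum_norm_le_sign_classes {I : Type} (r : seq I) (a : I -> Y) :
  \sum_(i <- r) `|a i| <= C ^+ 2 * d%:R *
    \sum_(p : {ffun 'I_d -> bool}) `|\sum_(i <- r | sign_pattern (f (a i)) == p) a i|.
Proof.
apply: le_trans (ler_sum _ (fun i _ => norm_le_f (a i))) _.
rewrite -mulr_sumr (sum_l1_sign_classes r (f \o a)) expr2 -!mulrA ler_wpM2l //.
rewrite !mulr_sumr; apply: ler_sum => p _; rewrite -linear_sum.
apply: le_trans (ler_sum _ (fun j _ => f_coord_le _ j)) _.
by rewrite sumr_const card_ord mulr_natl mulrnAr.
Qed.

Lemma series_norm_le_sign_classes {Z : normedModType R} {Zs : set (nat -> Z)}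
    {H : (nat -> Z) -> Y} {kappa : nat -> {linear Z -> Y}} (c : R) :
  standing_assumption Zs -> formal_conv Zs H kappa -> C ^+ 2 * d%:R <= c ->
  forall z, Zs z ->
  exists J : 'I_(2 ^ d) -> set nat,
    (forall i j, i != j -> J i `&` J j = set0) /\
    (\sum_(0 <= n <oo) (`|kappa n (z n)|)%:E
       <= (c * \sum_(i < 2 ^ d) `|H (restr_seq (J i) z)|)%:E)%E.
Proof.
move=> Zs_std H_conv c_ge z Zz; pose a n := kappa n (z n).
have [e e_bij] : exists e : 'I_(2 ^ d) -> {ffun 'I_d -> bool}, bijective e.
  by apply: bijective_ord_of_card; rewrite card_ffun card_bool card_ord.
pose S p N := \sum_(0 <= n < N | sign_pattern (f (a n)) == p) a n.
exists (fun i => [set` fun n => sign_pattern (f (a n)) == e i]); split.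
  move=> i i' i_neq_i'; apply/seteqP; split => // n [/eqP pat_i /eqP pat_i'].
  by move: i_neq_i'; rewrite (bij_inj e_bij (etrans (esym pat_i) pat_i')) eqxx.
apply: (nneseries_le_lim_of_partial_sums _ (fun N => c * \sum_i `|S (e i) N|)).
- by move=> n; exact: normr_ge0.
- move=> N; apply: le_trans (sum_norm_le_sign_classes _ a) _.
  by rewrite (reindex e (onW_bij _ e_bij)) ler_wpM2r ?sumr_ge0.
- apply: cvgMl_tmp; apply: cvg_big => // [|i _]; first exact: add_continuous.
  exact: cvg_norm (formal_conv_restr Zs_std H_conv _ _ Zz).
Qed.

End SignClassBounds.

Theorem lemma3p9 (R : realType) (Y : normedModType R) (d : nat) :
  findim Y d ->
  exists c : R, 0 < c /\
    forall (Z : normedModType R) (Zs : set (nat -> Z)),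
      standing_assumption Zs ->
      forall (H : (nat -> Z) -> Y) (kappa : nat -> {linear Z -> Y}),
        linear_functional Zs H ->
        formal_conv Zs H kappa ->
        (forall z, Zs z ->
           exists J : 'I_(2 ^ d) -> set nat,
             (forall i j, i != j -> J i `&` J j = set0) /\
             (\sum_(0 <= n <oo) (`|kappa n (z n)|)%:E
                <= (c * \sum_(i < 2 ^ d) `|H (restr_seq (J i) z)|)%:E)%E)
        /\ proper_conv Zs kappa.
Proof.
move=> /findim_coord_bounds[f [C [C_gt0 f_coord_le norm_le_f]]].
(* [d.+1] rather than [d] keeps the constant positive when [d = 0]. *)
exists (C ^+ 2 * d.+1%:R); split; first by rewrite mulr_gt0 ?exprn_gt0.
move=> Z Zs Zs_std H kappa _ H_conv.
have c_ge : C ^+ 2 * d%:R <= C ^+ 2 * d.+1%:R.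
  by rewrite ler_wpM2l ?ler_nat // exprn_ge0 // ltW.
have series_le := series_norm_le_sign_classes (ltW C_gt0) f_coord_le norm_le_f _
  Zs_std H_conv c_ge.
split; first exact: series_le.
by move=> z /series_le[J [_ /le_lt_trans]]; apply; exact: ltry.
Qed.
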